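(* The map ${}'\epsilon$ restricts to a bijection ${}'\mathcal X^{0,+}_{N-2}\to{}'E^{0,+}_N$ and to a bijection ${}''\mathcal X^{0,+}_{N-2}\to{}''E^{0,+}_N$.
   Context: Let $N\ge 3$ be an odd integer and $F=\mathbb Z/2\mathbb Z$. For integers $i,j$ let $[i,j]=\{h\in\mathbb Z: i\le h\le j\}$ (empty if $i>j$). Let $S_N=[1,N]$. The set of all subsets of $S_N$ is an $F$-vector space with sum $X+X'=(X\cup X')-(X\cap X')$; let $E_N$ be the subspace of subsets of even cardinality. A $2$-element subset $\{i,j\}\subseteq S_N$ is written $ij$ when either ($i<j$ and $j-i$ odd) or ($i>j$ and $i-j$ even); each $2$-element subset has exactly one such writing. Let $\mathcal P_N$ be the set of all finite sets $B$ of pairwise disjoint $2$-element subsets of $S_N$; for $B\in\mathcal P_N$ let $\mathrm{supp}(B)=\bigcup_{X\in B}X$, $B^0=\{\{i,j\}\in B: i-j\text{ even}\}$, $B^1=\{\{i,j\}\in B: i-j\text{ odd}\}$. A set $X\subseteq S_N$ is $0$-covered (resp. $1$-covered) by $B^1$ if there are $a_1b_1,\dots,a_sb_s\in B^1$ ($s\ge 0$, so $a_r<b_r$) with $X=[a_1,b_1]\sqcup\dots\sqcup[a_s,b_s]$ (resp. $X=[a_1,b_1]\sqcup\dots\sqcup[a_s,b_s]\sqcup\{u\}$ for some $u$), disjoint unions. Let ${}^*\mathcal P_N$ be the set of $B\in\mathcal P_N$ such that: for every $ij\in B^1$ the set $[i+1,j-1]$ is $0$-covered by $B^1$; and there is a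 sequence $i_*(B)=(i_1,\dots,i_{2s})$ in $S_N$ with $B^0=\{i_{2s}i_1,i_{2s-1}i_2,\dots,i_{s+1}i_s\}$ (so $s=|B^0|$; the sequence is unique) such that, if $s\ge1$, each of $[i_1+1,i_2-1],\dots,[i_{s-1}+1,i_s-1],[i_{s+1}+1,i_{s+2}-1],\dots,[i_{2s-1}+1,i_{2s}-1]$ is $0$-covered by $B^1$. For $B\in{}^*\mathcal P_N$ with $i_*(B)=(i_1,\dots,i_{2s})$ consider: (I) $s=0$, or $s\ge1$ and $[1,i_1-1]$ and $[i_{2s}+1,N]$ are $0$-covered by $B^1$; (II) $N\notin\mathrm{supp}(B)$ and either $s=0$, or $s$ is odd and either (i) $[1,i_1-1]$ is $1$-covered and $[i_{2s}+1,N-1]$ is $0$-covered by $B^1$, or (ii) $[1,i_1-1]$ is $0$-covered and $[i_{2s}+1,N-1]$ is $1$-covered by $B^1$; (III) (I) holds and, if $s$ is even then $\{i,N\}\in B$ for some even $i$, if $s$ is odd then $\{i,N\}\in B$ for some odd $i$. Let $\mathcal X^+_{N-2}$, $\mathcal X^-_{N-2}$ be the sets of $B\in{}^*\mathcal P_N$ satisfying (II), (III) respectively, and $\mathcal X_{N-2}=\mathcal X^+_{N-2}\sqcup\mathcal X^-_{N-2}$. For $B\in\mathcal X^+_{N-2}$ with $s\ge1$ there is a unique $u_B$: in case (i), $u_B\in[1,i_1-1]$ with $[1,u_B-1]$, $[u_B+1,i_1-1]$ $0$-covered by $B^1$ ($u_B$ odd); in case (ii), $u_B\in[i_{2s}+1,N-1]$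 with $[i_{2s}+1,u_B-1]$, $[u_B+1,N-1]$ $0$-covered by $B^1$ ($u_B$ even). Put $[[ij]]=[i,j]$ if $i<j$ and $[[ij]]=[i,N]\cup[1,j]$ if $i>j$. For $B\in\mathcal X_{N-2}$ define ${}'\epsilon(B)\in E_N$: ${}'\epsilon(B)=\sum_{ij\in B}[[ij]]$ if $B\in\mathcal X^-_{N-2}$ or if $B\in\mathcal X^+_{N-2}$ with $|B^0|=0$; ${}'\epsilon(B)=\sum_{ij\in B}[[ij]]+[u_B,N]$ if $B\in\mathcal X^+_{N-2}$, $|B^0|$ odd, $u_B$ even; ${}'\epsilon(B)=\sum_{ij\in B}[[ij]]+\{N\}+[1,u_B]$ if $B\in\mathcal X^+_{N-2}$, $|B^0|$ odd, $u_B$ odd. Let $\mathcal X^{0,+}_{N-2}=\{B\in\mathcal X^+_{N-2}:|B^0|=0\}$, ${}'\mathcal X^{0,+}_{N-2}=\{B\in\mathcal X^{0,+}_{N-2}: N-1\notin\mathrm{supp}(B)\}$, ${}''\mathcal X^{0,+}_{N-2}=\{B\in\mathcal X^{0,+}_{N-2}: N-1\in\mathrm{supp}(B)\}$. For $X\in E_N$ let $\gamma(X)=|\{x\in X: x\text{ even}\}|-|\{x\in X:x\text{ odd}\}|$; let $E^{0,+}_N=\{X\in E_N: N\notin X,\ \gamma(X)=0\}$, ${}'E^{0,+}_N=\{X\in E^{0,+}_N:N-1\notin X\}$, ${}''E^{0,+}_N=\{X\in E^{0,+}_N:N-1\in X\}$. *)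

From mathcomp Require Import all_boot all_order all_algebra.
Set Implicit Arguments. Unset Strict Implicit. Unset Printing Implicit Defensive.

(* Points of S_N = [1,N] are represented in 'I_N.+1 ; the point 0 is never
   used (every subset considered is required to avoid 0).                   *)
Notation pt N := ('I_N.+1).

Section Defs.
Variable N : nat.
Implicit Types (X Y : {set pt N}) (B : {set {set pt N}}).

Definition iv (a b : nat) : {set pt N} := [set x : pt N | (a <= x <= b)%N].

Definition inS X : bool := (@ord0 N) \notin X.

Definition symd X Y : {set pt N} := (X :|: Y) :\: (X :&: Y).

(* the 2-element set X is written "ij" *)
Definition writing X (i j : pt N) : bool :=
  (X == [set i; j]) &&
  (((i < j)%N && odd (j - i)) || ((j < i)%N && ~~ odd (i - j))).

Definition PN B : Prop :=
  (forall X, X \in B -> #|X| = 2 /\ inS X) /\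
  (forall X Y, X \in B -> Y \in B -> X != Y -> [disjoint X & Y]).

Definition supp B : {set pt N} := \bigcup_(X in B) X.

Definition B0 B : {set {set pt N}} :=
  [set X in B | [exists i : pt N, exists j : pt N,
     [&& X == [set i; j], i != j & ~~ odd (maxn i j - minn i j)]]].
Definition B1 B : {set {set pt N}} :=
  [set X in B | [exists i : pt N, exists j : pt N,
     [&& X == [set i; j], i != j & odd (maxn i j - minn i j)]]].

Definition zero_cov B X : Prop :=
  exists s : seq (pt N * pt N),
    (forall p, p \in s -> (p.1 < p.2)%N /\ [set p.1; p.2] \in B1 B) /\
    pairwise (fun p q : pt N * pt N => [disjoint iv p.1 p.2 & iv q.1 q.2]) s /\
    X = \bigcup_(p <- s) iv p.1 p.2.

Definition one_cov B X : Prop :=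
  exists (u : pt N) (Y : {set pt N}),
    zero_cov B Y /\ u \notin Y /\ X = u |: Y.

(* the sequence i_*(B) = (i_1,...,i_{2s}) = l (0-based: i_(k+1) = nth l k) *)
Definition istar_seq B (l : seq (pt N)) : Prop :=
  let s := #|B0 B| in
  let i k := nth (@ord0 N) l k in
  size l = (2 * s)%N /\
  (forall k, (k < 2 * s)%N -> (0 < i k)%N) /\
  (forall X, X \in B0 B <->
     exists k, (k < s)%N /\ X = [set i (2 * s - 1 - k)%N; i k]) /\
  (forall k, (k < s)%N -> writing [set i (2 * s - 1 - k)%N; i k] (i (2 * s - 1 - k)%N) (i k)) /\
  (forall k, (k.+1 < s)%N -> zero_cov B (iv (i k).+1 (i k.+1).-1)) /\
  (forall k, (s <= k)%N -> (k.+1 < 2 * s)%N -> zero_cov B (iv (i k).+1 (i k.+1).-1)).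

Definition starP B : Prop :=
  PN B /\
  (forall X (i j : pt N), X \in B1 B -> writing X i j ->
      zero_cov B (iv i.+1 j.-1)) /\
  exists l, istar_seq B l.

Definition condII B : Prop :=
  (@ord_max N) \notin supp B /\
  (#|B0 B| = 0%N \/
   (odd #|B0 B| /\
    exists l, istar_seq B l /\
      let s := #|B0 B| in
      let i1 := nth (@ord0 N) l 0 in
      let i2s := nth (@ord0 N) l (2 * s - 1) in
      ((one_cov B (iv 1 i1.-1) /\ zero_cov B (iv i2s.+1 N.-1)) \/
       (zero_cov B (iv 1 i1.-1) /\ one_cov B (iv i2s.+1 N.-1))))).

Definition Xplus B : Prop := starP B /\ condII B.
Definition X0plus B : Prop := Xplus B /\ #|B0 B| = 0%N.
Definition X0plus' B : Prop := X0plus B /\ (@inord N N.-1) \notin supp B.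
Definition X0plus'' B : Prop := X0plus B /\ (@inord N N.-1) \in supp B.

Definition wiv X : {set pt N} :=
  [set x : pt N | [exists i : pt N, exists j : pt N, writing X i j &&
     (((i < j)%N && (i <= x <= j)%N) ||
      ((j < i)%N && ((i <= x <= N)%N || (1 <= x <= j)%N)))]].

(* 'epsilon on X^{0,+}_{N-2} (where |B^0| = 0): sum_{ij in B} [[ij]] *)
Definition eps B : {set pt N} := \big[symd/set0]_(X in B) wiv X.

Definition EN X : Prop := inS X /\ ~~ odd #|X|.
Definition gamma X : int :=
  (#|[set x in X | ~~ odd x]|%:Z - #|[set x in X | odd x]|%:Z)%R.
Definition E0plus X : Prop := EN X /\ (@ord_max N) \notin X /\ gamma X = 0%R.
Definition E0plus' X : Prop := E0plus X /\ (@inord N N.-1) \notin X.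
Definition E0plus'' X : Prop := E0plus X /\ (@inord N N.-1) \in X.

End Defs.

Definition bij_betw (A C : Type) (P : A -> Prop) (Q : C -> Prop) (f : A -> C) : Prop :=
  (forall a, P a -> Q (f a)) /\
  (forall a a', P a -> P a' -> f a = f a' -> a = a') /\
  (forall c, Q c -> exists a, P a /\ f a = c).

From mathcomp Require Import all_boot all_order all_algebra.
From mathcomp Require Import zify.
Set Implicit Arguments. Unset Strict Implicit. Unset Printing Implicit Defensive.

(* Let B be in X^{0,+}_{N-2}.  Having no even pair, every pair of B is an arc
   [i, j] with i < j and j - i odd, and since the interior of each arc is tiled
   by arcs of B, these arcs are pairwise nested or disjoint and every point
   strictly inside an arc is an endpoint of another one; 'eps(B) is the set of
   points covered by an odd number of arcs.  Scanning S_N from left to right, the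
   nesting depth of B rises by 1 at a left end, drops by 1 at a right end, and
   is 0 around every other point; a left end is covered (new depth) times, a
   right end (old depth) times.  So the depth after a point is a function of the depth
   before it and of whether the point lies in 'eps(B): the depth function is a
   lattice path [level] computed from 'eps(B) alone, the arcs of B are its
   matched up- and down-steps, and B is determined by 'eps(B).
   Conversely, for X in E^{0,+}_N the numbers of even and odd elements of X read
   so far differ by about half the height of the path of X, so gamma X = 0 forces
   the path back to 0 at N, and its matched steps form an element of X^{0,+}_{N-2} with
   'eps equal to X.  Finally N-1, never a left end, lies in supp B iff it is a
   right end iff it is covered exactly once, i.e. iff N-1 lies in 'eps(B). *)

(* Depth after a point, from the depth [L] before it and the parity [b] of the
   number of arcs covering the point: opening an arc there covers it L+1 times,
   closing one covers it L times. *)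
Definition level_step (L : nat) (b : bool) : nat :=
  if L == 0 then nat_of_bool b
  else if odd L then (if b then L.-1 else L.+1)
  else (if b then L.+1 else L.-1).

Lemma level_step_up L : level_step L (odd L.+1) = L.+1.
Proof. by rewrite /level_step; case: L => [|L] //=; case: (odd L). Qed.

Lemma level_step_down L : 0 < L -> level_step L (odd L) = L.-1.
Proof. by rewrite /level_step; case: L => [|L] //= _; case: (odd L). Qed.

Fixpoint level (m : nat -> bool) (x : nat) : nat :=
  if x is y.+1 then level_step (level m y) (m y.+1) else 0.

Definition dyck_step (a b : nat) : bool :=
  (b == a.+1) || (a == b.+1) || ((a == 0) && (b == 0)).

Lemma level_dyck_step m y : dyck_step (level m y) (level m y.+1).
Proof.
rewrite /= /level_step /dyck_step; case: (level m y) => [|L] /=; first by case: (m _).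
by case: (odd L); case: (m _) => /=; lia.
Qed.

Lemma level_step_inj L : injective (level_step L).
Proof. by rewrite /level_step => b b'; case: b b' (L == 0) (odd L) => [] [] [] [] //=; lia. Qed.

Lemma level_inj m m' N : (forall x, x <= N -> level m x = level m' x) ->
  forall x, 0 < x <= N -> m x = m' x.
Proof.
move=> eq_l [|x] // hx; have /= := eq_l x.+1 (proj2 (andP hx)).
by rewrite eq_l; [apply: level_step_inj | case/andP: hx; lia].
Qed.

Section Matching.
Variable l : nat -> nat.

Definition matched (i j : nat) : bool :=
  [&& 0 < i, i < j, l i == (l i.-1).+1, l j == l i.-1 &
      all (fun y => l i.-1 < l y) (iota i (j - i))].

Lemma matchedP i j :
  reflect [/\ 0 < i, i < j, l i = (l i.-1).+1, l j = l i.-1 &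
              forall y, i <= y < j -> l i.-1 < l y]
          (matched i j).
Proof.
apply: (iffP and5P) => -[h1 h2 /eqP h3 /eqP h4 h5]; split=> //; try exact/eqP.
- by move=> y hy; apply: (allP h5); rewrite mem_iota; lia.
- by apply/allP=> y; rewrite mem_iota => hy; apply: h5; lia.
Qed.

Lemma matched_uniq_r i j j' : matched i j -> matched i j' -> j = j'.
Proof.
move=> /matchedP [_ hij _ lj above] /matchedP [_ hij' _ lj' above'].
case: (ltngtP j j') => // hj; [have := above' j | have := above j']; lia.
Qed.

Lemma matched_uniq_l i i' j : matched i j -> matched i' j -> i = i'.
Proof.
move=> /matchedP [_ hij li lj above] /matchedP [_ hij' li' lj' above'].
case: (ltngtP i i') => // hi; [have := above i'.-1 | have := above' i.-1]; lia.
Qed.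

Lemma no_matched_chain i j i' : matched i j -> matched i' i -> False.
Proof.
move=> /matchedP [_ _ li _ _] /matchedP [_ hi' _ li' above'].
have := above' i.-1; lia.
Qed.

Lemma matched_nested i j a b : matched i j -> matched a b -> i < a < j -> b < j.
Proof.
move=> mij mab ha; case: (ltngtP b j) => // hb.
- move: mij mab => /matchedP [_ _ _ lj above] /matchedP [_ _ _ _ above'].
  have := above' j; have := above a.-1; lia.
- by subst b; have := matched_uniq_l mij mab; lia.
Qed.

Lemma matched_siblings a b a' b' :
  matched a b -> matched a' b' -> l a.-1 = l a'.-1 -> a < a' -> b < a'.
Proof.
move=> mab mab' he ha; case: (ltngtP b a') => // hb.
- by case/matchedP: mab => _ _ _ _ above; have := above a'.-1; lia.
- by subst a'; case: (no_matched_chain mab' mab).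
Qed.

Hypothesis l_step : forall y, dyck_step (l y) (l y.+1).

Lemma matched_odd i j : matched i j -> odd (j - i).
Proof.
move=> /matchedP [_ hij li lj above].
have parity k : i + k <= j -> odd (l (i + k) + (i + k)) = odd (l i + i).
  elim: k => [|k IH] hk; first by rewrite addn0.
  rewrite -IH; last lia.
  by have := l_step (i + k); have := above (i + k); rewrite /dyck_step addnS; lia.
by have := parity (j - i); rewrite subnKC; [move=> /(_ (leqnn _)); lia | lia].
Qed.

Hypothesis l0 : l 0 = 0.
Variable N : nat.
Hypothesis lN : l N = 0.

Lemma matched_of_up i : 0 < i <= N -> l i = (l i.-1).+1 ->
  exists j, i < j <= N /\ matched i j.
Proof.
move=> hi li.
have hiN : i < N by case: (ltngtP i N) hi => [| |e] //; [lia | rewrite e in li; lia].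
have ex : exists y, (i < y) && (l y <= l i.-1) by exists N; lia.
case: (ex_minnP ex) => j /andP [hj lj] jmin.
have hjN : j <= N by apply: jmin; lia.
have above y : i <= y < j -> l i.-1 < l y.
  move=> hy; case: (ltngtP y i) => [|hy'|->]; try lia.
  by case: leqP => // hle; have := jmin y; rewrite hy' hle => /(_ isT); lia.
exists j; split; first lia.
apply/matchedP; split=> //; try lia.
by have := above j.-1; have := l_step j.-1; rewrite prednK /dyck_step; lia.
Qed.

Lemma matched_of_down j : 0 < j <= N -> l j.-1 = (l j).+1 ->
  exists i, 0 < i < j /\ matched i j.
Proof.
move=> hj lj.
have ex : exists y, (y < j) && (l y <= l j) by exists 0; rewrite l0; lia.
have bnd y : (y < j) && (l y <= l j) -> y <= j by lia.
case: (ex_maxnP ex bnd) => y0 /andP [hy0 ly0] y0max.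
have hy0j : y0 < j.-1.
  by case: (ltngtP y0 j.-1) => // [?|e]; [lia | rewrite e in ly0; lia].
have above z : y0 < z < j -> l j < l z.
  by move=> hz; case: leqP => // hle; have := y0max z; rewrite hle; lia.
have := l_step y0; rewrite /dyck_step => st.
exists y0.+1; split; first lia.
apply/matchedP; split=> //=; try (have := above y0.+1; lia).
by move=> y hy; have := above y; lia.
Qed.

Lemma matched_cover i j z : j <= N -> matched i j -> i < z < j ->
  exists a b, [/\ matched a b, i < a, b < j, a <= z <= b & l a.-1 = l i].
Proof.
move=> hjN mij hz; have /matchedP [_ _ li lj above] := mij.
have ex : exists y, (i <= y) && (y < z) && (l y <= l i) by exists i; lia.
have bnd y : (i <= y) && (y < z) && (l y <= l i) -> y <= z by lia.
case: (ex_maxnP ex bnd) => y0 /andP [/andP [hy0 hy0z] ly0] y0max.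
have ly0i : l y0 = l i by have := above y0; lia.
have up : l y0.+1 = (l y0).+1.
  by have := above y0.+1; have := l_step y0; rewrite /dyck_step; lia.
have [b [hb mb]] := matched_of_up (i := y0.+1) ltac:(lia) up.
exists y0.+1, b; split=> //; try lia.
- by have := matched_nested mij mb; lia.
- case: (leqP z b) => hzb; first lia.
  by have /matchedP [_ _ _ lb _] := mb; have := y0max b; rewrite /= in lb; lia.
Qed.

End Matching.

Lemma eq_matched N (l l' : nat -> nat) i j : (forall x, x <= N -> l x = l' x) -> j <= N ->
  matched l i j = matched l' i j.
Proof.
move=> eq_l jN; rewrite /matched; case: (ltnP i j) => ij; last by rewrite !andbF.
rewrite !eq_l; try lia.
by congr [&& _, _, _, _ & _]; apply: eq_in_all => y; rewrite mem_iota => hy; rewrite eq_l //; lia.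
Qed.

Section ParityBalance.
Variable m : nat -> bool.
Hypothesis m0 : m 0 = false.

Definition count_even x := \sum_(0 <= y < x.+1) (m y && ~~ odd y).
Definition count_odd x := \sum_(0 <= y < x.+1) (m y && odd y).

Lemma level_balance x :
  if odd (x + level m x) then count_even x = count_odd x + uphalf (level m x)
  else count_odd x = count_even x + uphalf (level m x).
Proof.
elim: x => [|x IH]; first by rewrite /count_even /count_odd !big_nat1 m0.
rewrite /count_even /count_odd !(big_nat_recr x.+1) // -/(count_even x) -/(count_odd x).
move: IH; rewrite [level m x.+1]/= /level_step.
case: (level m x) => [|L] /=; case: (m x.+1) => /=;
  rewrite ?oddD /= ?addn0 ?negbK; case hx: (odd x) => /=; try lia;
  case hL: (odd L) => /=; rewrite ?oddD ?hx ?hL /=; lia.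
Qed.

Lemma level_end N : count_even N = count_odd N -> m N = false -> 0 < N ->
  level m N = 0 /\ level m N.-1 = 0.
Proof.
move=> balanced mN hN.
have lN : level m N = 0 by have := level_balance N; rewrite balanced; case: ifP; lia.
split=> //; case: N {balanced} hN mN lN => [//|n] _ mN /=.
by rewrite mN /level_step; case: (level m n) => [|[|L]] //=; case: ifP.
Qed.

End ParityBalance.

Definition nat_mem N (X : {set pt N}) (y : nat) : bool := (y <= N) && (inord y \in X).

Lemma nat_mem_ord N (X : {set pt N}) (y : pt N) : nat_mem X y = (y \in X).
Proof. by rewrite /nat_mem -ltnS ltn_ord inord_val. Qed.

Lemma sum_nat_mem N (X : {set pt N}) (P : pred nat) :
  \sum_(0 <= y < N.+1) (nat_mem X y && P y) = #|[set y in X | P y]|.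
Proof.
rewrite big_mkord -sum1dep_card [RHS]big_mkcond /=.
by apply: eq_bigr => y _; rewrite nat_mem_ord; case: (_ && _).
Qed.

Lemma card_even_odd N (X : {set pt N}) :
  #|X| = #|[set y in X | ~~ odd y]| + #|[set y in X | odd y]|.
Proof.
rewrite -(cardsID [set y : pt N | odd y] X) addnC.
by congr (_ + _); apply: eq_card => y; rewrite !inE andbC.
Qed.

Lemma nat_mem0 N (X : {set pt N}) : inS X -> nat_mem X 0 = false.
Proof.
move=> X0; rewrite /nat_mem (_ : inord 0 = ord0) ?(negbTE X0) ?andbF //.
by apply: val_inj; rewrite /= inordK.
Qed.

Lemma level_gamma N (X : {set pt N}) : inS X -> level (nat_mem X) N = 0 ->
  gamma X = 0%R /\ ~~ odd #|X|.
Proof.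
move=> X0 lN; have := level_balance (nat_mem0 X0) N; rewrite lN /= => bal.
have {bal} : count_even (nat_mem X) N = count_odd (nat_mem X) N by case: ifP bal; lia.
rewrite /count_even /count_odd !sum_nat_mem => balanced.
by rewrite /gamma balanced GRing.subrr card_even_odd balanced addnn odd_double.
Qed.

Lemma ord_set2_inj n (a b c d : 'I_n) :
  a < b -> c < d -> [set a; b] = [set c; d] -> a = c /\ b = d.
Proof.
move=> hab hcd E.
have /set2P ha : a \in [set c; d] by rewrite -E set21.
have /set2P hb : b \in [set c; d] by rewrite -E set22.
have /set2P hc : c \in [set a; b] by rewrite E set21.
have {}ha : (a : nat) = c \/ (a : nat) = d by case: ha => ->; auto.
have {}hb : (b : nat) = c \/ (b : nat) = d by case: hb => ->; auto.
have {}hc : (c : nat) = a \/ (c : nat) = b by case: hc => ->; auto.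
have ac : (a : nat) = c by lia.
have bd : (b : nat) = d by lia.
by split; apply: val_inj.
Qed.

Lemma writing_odd_set2 N (a b i j : pt N) : a < b -> odd (b - a) ->
  writing [set a; b] i j -> i = a /\ j = b.
Proof.
move=> ab hod /andP [/eqP E /orP [] /andP [ij hw]].
  by have [-> ->] := ord_set2_inj ab ij E.
rewrite [[set i; j]]setUC in E; have [ea eb] := ord_set2_inj ab ij E.
by move: hw; rewrite -ea -eb hod.
Qed.

Section ArcSystem.
Variables (N : nat) (B : {set {set pt N}}).
Implicit Types (p q : pt N * pt N).

Definition arc p : bool := (p.1 < p.2) && ([set p.1; p.2] \in B).
Definition depth (x : nat) : nat := #|[set p | arc p && (p.1 <= x < p.2)]|.
Definition cover_count (x : nat) : nat := #|[set p | arc p && (p.1 <= x <= p.2)]|.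
Definition opens (x : nat) : bool := [exists p, arc p && (p.1 == x :> nat)].
Definition closes (x : nat) : bool := [exists p, arc p && (p.2 == x :> nat)].

Definition odd_arcs : Prop := forall P, P \in B -> exists p : pt N * pt N,
  [/\ p.1 < p.2, P = [set p.1; p.2], 0 < p.1 & odd (p.2 - p.1)].
Definition arcs_disjoint : Prop := forall p q, arc p -> arc q ->
  [|| p.1 == q.1 :> nat, p.1 == q.2 :> nat, p.2 == q.1 :> nat | p.2 == q.2 :> nat] ->
  p = q.
Definition arcs_filled : Prop := forall p (y : nat), arc p -> p.1 < y < p.2 ->
  opens y || closes y.
Definition arcs_nested : Prop := forall p q, arc p -> arc q -> p.1 < q.1 < p.2 -> q.2 < p.2.

Hypothesis B_odd : odd_arcs.

Lemma arc_odd p : arc p -> 0 < p.1 /\ odd (p.2 - p.1).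
Proof.
case/andP=> hlt hin; have [q [q1 q2 q3 q4]] := B_odd hin.
by have [-> ->] := ord_set2_inj hlt q1 q2.
Qed.

Lemma arc_pos p : arc p -> 0 < p.1 < p.2.
Proof. by move=> h; have [-> _] := arc_odd h; case/andP: h. Qed.

Lemma depth0 : depth 0 = 0.
Proof.
apply/eqP; rewrite cards_eq0; apply/eqP/setP=> -[a b]; rewrite !inE /=.
by case hp: (arc (a, b)) => //=; have /= := arc_pos hp; lia.
Qed.

Lemma not_opens_arc x p : ~~ opens x -> arc p -> p.1 != x :> nat.
Proof. by move=> no hp; apply: contraNneq no => e; apply/existsP; exists p; rewrite hp e eqxx. Qed.

Lemma not_closes_arc x p : ~~ closes x -> arc p -> p.2 != x :> nat.
Proof. by move=> nc hp; apply: contraNneq nc => e; apply/existsP; exists p; rewrite hp e eqxx. Qed.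

Hypothesis B_disj : arcs_disjoint.

Lemma opens_not_closes x : opens x -> ~~ closes x.
Proof.
case/existsP=> -[a0 b0] /andP [h0 /eqP /= e0]; apply/negP.
case/existsP=> -[a b] /andP [hp /eqP /= e].
have [ea eb] : (a, b) = (a0, b0) by apply: B_disj => //=; rewrite e e0 eqxx ?orbT.
by subst a b; have /= := arc_pos h0; lia.
Qed.

Lemma depth_setD1_endpoint x p : arc p -> (p.1 == x :> nat) || (p.2 == x :> nat) ->
  [set q | arc q && (q.1 <= x < q.2)] :\ p = [set q | arc q && (q.1 <= x.-1 < q.2)] :\ p.
Proof.
case: p => a0 b0 hp px; have /= := arc_pos hp => pp.
apply/setP=> -[a b]; rewrite !inE; case: eqVneq => //= ne.
case hq: (arc (a, b)) => //=; have /= := arc_pos hq => pq.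
have nx : [&& (a : nat) != x & (b : nat) != x].
  apply/andP; split; apply/eqP=> e; case/eqP: ne; apply: B_disj => //=;
  by rewrite e; case/orP: px => /eqP <-; rewrite eqxx ?orbT.
by apply/idP/idP; move: px nx; lia.
Qed.

Lemma depth_opens x : opens x -> depth x = (depth x.-1).+1.
Proof.
case/existsP=> -[a b] /andP [hp /eqP /= ax]; have /= := arc_pos hp => ab.
rewrite /depth (cardsD1 (a, b)) (cardsD1 (a, b) [set q | _ && _]).
by rewrite depth_setD1_endpoint ?ax ?eqxx // !inE hp /=; lia.
Qed.

Lemma depth_closes x : closes x -> depth x.-1 = (depth x).+1.
Proof.
case/existsP=> -[a b] /andP [hp /eqP /= bx]; have /= := arc_pos hp => ab.
rewrite /depth (cardsD1 (a, b)) (cardsD1 (a, b) [set q | _ && _]).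
by rewrite (depth_setD1_endpoint (x := x)) ?bx ?eqxx ?orbT // !inE hp /=; lia.
Qed.

Lemma depth_idle x : ~~ opens x -> ~~ closes x -> depth x = depth x.-1.
Proof.
move=> no nc; apply: eq_card => -[a b]; rewrite !inE /=.
case hp: (arc (a, b)) => //=.
have := not_opens_arc no hp; have := not_closes_arc nc hp; rewrite /=.
by move=> nb na; apply/idP/idP; lia.
Qed.

Lemma cover_count_opens x : opens x -> cover_count x = depth x.
Proof.
move=> ho; have nc := opens_not_closes ho.
apply: eq_card => -[a b]; rewrite !inE /=.
case hp: (arc (a, b)) => //=; have /= := not_closes_arc nc hp.
by move=> nb; apply/idP/idP; lia.
Qed.

Lemma cover_count_closes x : closes x -> cover_count x = depth x.-1.
Proof.
move=> hc; have no : ~~ opens x by apply: contraL hc; apply: opens_not_closes.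
have hx : 0 < x.
  by case/existsP: hc => -[a b] /andP [hp /eqP /= <-]; have /= := arc_pos hp; lia.
apply: eq_card => -[a b]; rewrite !inE /=.
case hp: (arc (a, b)) => //=; have /= := not_opens_arc no hp.
by move=> na; apply/idP/idP; lia.
Qed.

Hypothesis B_filled : arcs_filled.

Lemma cover_count_idle x : 0 < x -> ~~ opens x -> ~~ closes x ->
  cover_count x = 0 /\ depth x.-1 = 0.
Proof.
move=> hx no nc; split; apply/eqP; rewrite cards_eq0; apply/eqP/setP=> -[a b];
  rewrite !inE /=; case hp: (arc (a, b)) => //=;
  have /= na := not_opens_arc no hp; have /= nb := not_closes_arc nc hp;
  apply/negP=> hab; have := @B_filled (a, b) x hp;
  rewrite /= (negbTE no) (negbTE nc); lia.
Qed.

End ArcSystem.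

Section EpsArcs.
Variables (N : nat) (B : {set {set pt N}}).

Lemma mem_eps x : (x \in eps B) = odd #|[set P in B | x \in wiv P]|.
Proof.
have in_symd : {morph (fun A : {set pt N} => x \in A) : A C / symd A C >-> A (+) C}.
  by move=> A C; rewrite /symd !inE; case: (x \in A); case: (x \in C).
rewrite /eps (big_morph _ in_symd (in_set0 x)) -sum1dep_card big_mkcondr /=.
rewrite (big_morph _ (fun a b => oddD a b) (erefl (odd 0))).
by apply: eq_bigr => P _; case: (x \in wiv P).
Qed.

Lemma wiv_set2 (i j : pt N) : i < j -> odd (j - i) -> wiv [set i; j] = iv N i j.
Proof.
move=> ij hod; apply/setP=> x; rewrite !inE; apply/existsP/idP.
- case=> a /existsP [b /andP [w hx]]; have [ea eb] := writing_odd_set2 ij hod w.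
  by move: hx; rewrite ea eb ij /=; lia.
- by move=> hx; exists i; apply/existsP; exists j; rewrite /writing eqxx ij hod /= hx.
Qed.

Hypothesis B_odd : odd_arcs B.

Lemma card_wiv_cover (x : pt N) : #|[set P in B | x \in wiv P]| = cover_count B x.
Proof.
have -> : [set P in B | x \in wiv P] = (fun p : pt N * pt N => [set p.1; p.2]) @:
                                      [set p | arc B p && (p.1 <= x <= p.2)].
  apply/setP=> P; rewrite inE; apply/andP/imsetP.
  - case=> hP hx; have [[a b] [/= ab eP _ hod]] := B_odd hP.
    exists (a, b) => //; rewrite inE /arc /= ab -eP hP /=.
    by move: hx; rewrite eP wiv_set2 // inE.
  - case=> -[a b]; rewrite inE /= => /andP [hp hx] ->; split; first by case/andP: hp.
    have [_ hod] := arc_odd B_odd hp; case/andP: hp => /= ab _.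
    by rewrite wiv_set2 // inE.
rewrite card_in_imset // => -[a b] [c d]; rewrite !inE /=.
by move=> /andP [/andP [ab _] _] /andP [/andP [cd _] _] /(ord_set2_inj ab cd) /= [-> ->].
Qed.

Lemma mem_eps_cover (x : pt N) : (x \in eps B) = odd (cover_count B x).
Proof. by rewrite mem_eps card_wiv_cover. Qed.

Hypotheses (B_disj : arcs_disjoint B) (B_filled : arcs_filled B).

Lemma depth_level x : x <= N -> depth B x = level (nat_mem (eps B)) x.
Proof.
elim: x => [|x IH] hx; first by rewrite depth0.
rewrite /= -IH 1?ltnW //.
have -> : nat_mem (eps B) x.+1 = odd (cover_count B x.+1).
  by rewrite /nat_mem hx /= mem_eps_cover inordK.
case ho: (opens B x.+1).
  by rewrite cover_count_opens // depth_opens //= level_step_up.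
case hc: (closes B x.+1).
  by rewrite cover_count_closes // depth_closes //= level_step_down.
have [-> d0] := cover_count_idle B_filled (ltn0Sn x) (negbT ho) (negbT hc).
by rewrite depth_idle ?ho ?hc //= d0.
Qed.

End EpsArcs.

Section ArcsAreMatchings.
Variables (N : nat) (B : {set {set pt N}}).
Hypotheses (B_odd : odd_arcs B) (B_disj : arcs_disjoint B) (B_nested : arcs_nested B).

Lemma arc_enclosing (i j a b : pt N) : arc B (i, j) -> arc B (a, b) ->
  a <= i.-1 < b -> j < b.
Proof.
move=> hij hab hi; have /= ij := arc_pos B_odd hij; have /= ab := arc_pos B_odd hab.
have b_ij : (b : nat) \notin [:: i : nat; j : nat].
  apply/negP=> b_in; have [ea _] : (a, b) = (i, j).
    by apply: B_disj => //=; move: b_in; rewrite !inE => /orP [] /eqP ->; rewrite eqxx ?orbT.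
  by move: hi; rewrite ea; lia.
by have /= := B_nested hab hij; move: b_ij; rewrite !inE; lia.
Qed.

Lemma arc_matched (p : pt N * pt N) : arc B p -> matched (depth B) p.1 p.2.
Proof.
case: p => i j hij /=; have /= /andP [i0 ij] := arc_pos B_odd hij.
have opens_i : opens B i by apply/existsP; exists (i, j); rewrite hij eqxx.
apply/matchedP; split=> //; first exact: depth_opens.
- apply: eq_card => -[a b]; rewrite !inE /=.
  case: (eqVneq (a, b) (i, j)) => [[-> ->]|ne]; first by rewrite hij /=; lia.
  case hab: (arc B (a, b)) => //=; have /= ab := arc_pos B_odd hab.
  have [ai aj] : (a : nat) != i /\ (a : nat) != j.
    by split; apply/eqP=> e; case/eqP: ne; apply: B_disj; rewrite //= e eqxx ?orbT.
  have := B_nested hij hab; have := arc_enclosing hij hab; rewrite /=.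
  by move=> o1 o2; apply/idP/idP; lia.
- move=> y hy; rewrite /depth.
  apply: (@leq_trans #|(i, j) |: [set p | arc B p && (p.1 <= i.-1 < p.2)]|).
    by rewrite cardsU1 !inE /= hij /=; lia.
  apply/subset_leq_card/subsetP=> -[a b]; rewrite !inE /=.
  case/orP=> [/eqP [-> ->]|/andP [hab hb]]; first by rewrite hij /=; lia.
  by have := arc_enclosing hij hab hb; rewrite hab /=; lia.
Qed.

Lemma matched_arc (p : pt N * pt N) : matched (depth B) p.1 p.2 -> arc B p.
Proof.
case: p => i j /= mij; have /matchedP [i0 ij li lj above] := mij.
case oi: (opens B i); last first.
  case ci: (closes B i); first by have := depth_closes B_odd B_disj ci; lia.
  by have := depth_idle (negbT oi) (negbT ci); lia.
case/existsP: oi => -[a b] /andP [hab /eqP /= ai].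
have mab := arc_matched hab; rewrite /= ai in mab.
have jb := matched_uniq_r mij mab.
by have -> : (i, j) = (a, b) by congr pair; apply: val_inj.
Qed.

Lemma arcE (p : pt N * pt N) : arc B p = matched (depth B) p.1 p.2.
Proof. by apply/idP/idP; [apply: arc_matched | apply: matched_arc]. Qed.

End ArcsAreMatchings.

Lemma odd_arcs_eq N (B B' : {set {set pt N}}) :
  odd_arcs B -> odd_arcs B' -> arc B =1 arc B' -> B = B'.
Proof.
suff sub (C C' : {set {set pt N}}) : odd_arcs C -> arc C =1 arc C' -> {subset C <= C'}.
  by move=> oB oB' eB; apply/setP/subset_eqP/andP; split; apply/subsetP; apply: sub.
move=> oC eC P PC; have [[a b] [/= ab EP _ _]] := oC P PC.
have /andP [_ /=] : arc C' (a, b) by rewrite -eC /arc /= ab -EP.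
by rewrite EP.
Qed.

Lemma zero_cov_of_set N (B : {set {set pt N}}) (S : {set pt N * pt N}) (Y : {set pt N}) :
  (forall p, p \in S -> p.1 < p.2 /\ [set p.1; p.2] \in B1 B) ->
  {in S &, forall p q : pt N * pt N, p != q -> [disjoint iv N p.1 p.2 & iv N q.1 q.2]} ->
  (forall y, reflect (exists2 p, p \in S & y \in iv N p.1 p.2) (y \in Y)) ->
  zero_cov B Y.
Proof.
move=> S_arcs S_disj S_cov; exists (enum S); split; last split.
- by move=> p; rewrite mem_enum; apply: S_arcs.
- apply: (@sub_in_pairwise _ (mem S) [rel p q | p != q]).
  + by move=> p q /= pS qS; apply: S_disj.
  + by apply/allP=> p; rewrite mem_enum.
  + by rewrite -uniq_pairwise enum_uniq.
- apply/setP=> y; rewrite bigcup_seq; apply/S_cov/bigcupP => -[p pS yp];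
  by exists p; rewrite ?mem_enum in pS *.
Qed.

Section OddArcs.
Variables (N : nat) (B : {set {set pt N}}).
Hypothesis B_odd : odd_arcs B.

Lemma odd_arcs_PN : arcs_disjoint B -> PN B.
Proof.
move=> B_disj; split=> [P PB | P Q PB QB ne].
  have [[a b] [/= ab -> a0 _]] := B_odd PB.
  split; first by rewrite cards2 -val_eqE /=; case: eqVneq ab => // ->; rewrite ltnn.
  by rewrite /inS; apply/set2P=> -[] /(congr1 val) /=; lia.
have [[a b] [/= ab EP _ _]] := B_odd PB; have [[c d] [/= cd EQ _ _]] := B_odd QB.
rewrite -setI_eq0; apply/eqP/setP=> z; rewrite !inE; apply/negP => /andP [zP zQ].
have [ac bd] : (a, b) = (c, d).
  apply: B_disj; rewrite /arc /= ?ab ?cd -?EP -?EQ //.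
  by move: zP zQ; rewrite EP EQ => /set2P [] -> /set2P [] ->; rewrite eqxx ?orbT.
by move: ne; rewrite EP EQ ac bd eqxx.
Qed.

Lemma odd_arcs_B0 : B0 B = set0.
Proof.
apply/setP=> P; rewrite !inE; apply/negP=> /andP [hP /existsP [i /existsP [j]]].
case/and3P=> /eqP E ij; have [[a b] [/= ab EP _ hod]] := B_odd hP.
rewrite EP in E; case: (ltngtP i j) => [lt|gt|/val_inj eq]; last by rewrite eq eqxx in ij.
- by have [<- <-] := ord_set2_inj ab lt E; move: hod; lia.
- rewrite [[set i; j]]setUC in E.
  by have [<- <-] := ord_set2_inj ab gt E; move: hod; lia.
Qed.

Lemma odd_arcs_B1 P : P \in B -> P \in B1 B.
Proof.
move=> hP; have [[a b] [/= ab EP _ hod]] := B_odd hP.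
rewrite inE hP /=; apply/existsP; exists a; apply/existsP; exists b.
by rewrite EP eqxx neq_ltn ab /=; lia.
Qed.

Lemma mem_supp (z : pt N) : (z \in supp B) = opens B z || closes B z.
Proof.
apply/bigcupP/orP.
- case=> P hP; have [[a b] [/= ab EP _ _]] := B_odd hP.
  have hab : arc B (a, b) by rewrite /arc /= ab -EP hP.
  by rewrite EP => /set2P [] ->; [left | right]; apply/existsP; exists (a, b); rewrite hab eqxx.
- case=> /existsP [[a b] /andP [/andP [_ hab] /eqP /= /val_inj <-]];
  by exists [set a; b]; rewrite ?set21 ?set22.
Qed.

Lemma odd_arcs_istar_nil : istar_seq B [::].
Proof.
rewrite /istar_seq odd_arcs_B0 cards0; do !split=> //; try by move=> k; lia.
- by rewrite inE.
- by case=> k [].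
Qed.

End OddArcs.

Section X0plusArcs.
Variables (N : nat) (B : {set {set pt N}}).
Hypothesis hB : X0plus B.

Lemma X0plus_odd_arcs : odd_arcs B.
Proof.
have [[[[B2 _] _] _] _] := hB; have [_ /cards0_eq B0_0] := hB.
move=> P hP; have [/eqP /cards2P [x [y [xy EP]]] P0] := B2 P hP.
have oddP (a b : pt N) : a < b -> P = [set a; b] -> exists p : pt N * pt N,
    [/\ p.1 < p.2, P = [set p.1; p.2], 0 < p.1 & odd (p.2 - p.1)].
  move=> ab EP'; exists (a, b); split => //=.
  - case: (posnP a) => // a0; have {}a0 : a = ord0 by apply: val_inj.
    by move: P0; rewrite /inS EP' a0 set21.
  - apply: contraT => ev; suff : P \in B0 B by rewrite B0_0 inE.
    rewrite inE hP; apply/existsP; exists a; apply/existsP; exists b.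
    by rewrite EP' eqxx neq_ltn ab /=; move: ev; lia.
case: (ltngtP x y) => [lt|gt|/val_inj eq]; last by rewrite eq eqxx in xy.
- exact: oddP lt EP.
- by apply: oddP gt _; rewrite EP setUC.
Qed.

Lemma X0plus_arcs_disjoint : arcs_disjoint B.
Proof.
have [[[[_ B_disj] _] _] _] := hB.
move=> [a b] [c d] /andP [/= ab hP] /andP [/= cd hQ] share.
case: (eqVneq [set a; b] [set c; d]) => [E|ne]; first by have [-> ->] := ord_set2_inj ab cd E.
have [z [zP zQ]] : exists z, z \in [set a; b] /\ z \in [set c; d].
  case/or4P: share => /eqP /val_inj ->;
    [exists c | exists d | exists c | exists d]; by rewrite ?set21 ?set22.
by move: (B_disj _ _ hP hQ ne); rewrite -setI_eq0 => /eqP /setP /(_ z); rewrite inE zP zQ inE.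
Qed.

Lemma X0plus_arc_ltN (a b : pt N) : arc B (a, b) -> b < N.
Proof.
move=> hab; have [[_ [noN _]] _] := hB.
rewrite ltn_neqAle -ltnS ltn_ord andbT; apply: contraNneq noN => bN.
rewrite (mem_supp X0plus_odd_arcs); apply/orP; right.
by apply/existsP; exists (a, b); rewrite hab /= bN.
Qed.

Lemma X0plus_arc_cover (i j : pt N) (y : nat) : arc B (i, j) -> i < y < j ->
  exists a b : pt N, [/\ arc B (a, b), i < a, b < j & a <= y <= b].
Proof.
move=> hij hy; have [[[_ [B_cov _]] _] _] := hB.
have [_ hod] := arc_odd X0plus_odd_arcs hij; have /andP [/= ij hP] := hij.
have w : writing [set i; j] i j by rewrite /writing eqxx ij hod.
have [s [s_arcs [_ Es]]] := B_cov _ i j (odd_arcs_B1 X0plus_odd_arcs hP) w.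
have in_s (z : pt N) :
    reflect (exists2 p, p \in s & p.1 <= z <= p.2) (i < z <= j.-1).
  have := Es; rewrite bigcup_seq => /setP /(_ z); rewrite inE => ->.
  by apply: (iffP bigcupP) => -[p ps pz]; exists p => //; move: pz; rewrite inE.
have jN := ltn_ord j.
have /in_s [[a b] abs /=] : i < (inord y : pt N) <= j.-1 by rewrite inordK //; lia.
rewrite inordK => [ab_y|]; last lia.
have [/= ab abB] := s_arcs _ abs.
have /andP [ia aj] : i < a <= j.-1 by apply/in_s; exists (a, b) => //=; lia.
have /andP [ib bj] : i < b <= j.-1 by apply/in_s; exists (a, b) => //=; lia.
exists a, b; split => //; try lia.
by rewrite /arc /= ab; case/setIdP: abB.
Qed.

Lemma X0plus_arcs_filled : arcs_filled B.
Proof.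
move=> [i j] y hij /=; move: {2}(j - i) (leqnn (j - i)) => n.
elim: n i j y hij => [|n IH] i j y hij hn hy; first lia.
have [a [b [hab ia bj ab_y]]] := X0plus_arc_cover hij hy.
case: (eqVneq (a : nat) y) => [a_y|a_y].
  by apply/orP; left; apply/existsP; exists (a, b); rewrite hab /= a_y.
case: (eqVneq (b : nat) y) => [b_y|b_y].
  by apply/orP; right; apply/existsP; exists (a, b); rewrite hab /= b_y.
by apply: (IH a b) => //; lia.
Qed.

Lemma X0plus_arcs_nested : arcs_nested B.
Proof.
move=> [i j] [a b] hij hab /=; move: {2}(j - i) (leqnn (j - i)) => n.
elim: n i j hij => [|n IH] i j hij hn hy; first lia.
have [c [d [hcd ic dj cd_a]]] := X0plus_arc_cover hij hy.
case: (eqVneq (c : nat) a) => [ca|ca].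
  have [_ <-] : (c, d) = (a, b) by apply: X0plus_arcs_disjoint; rewrite //= ca eqxx.
  exact: dj.
case: (eqVneq (d : nat) a) => [da|da].
  have [ec _] : (c, d) = (a, b).
    by apply: X0plus_arcs_disjoint; rewrite //= da eqxx ?orbT.
  by have /= := arc_pos X0plus_odd_arcs hcd; rewrite ec -da; lia.
by have := IH c d hcd ltac:(lia) ltac:(lia); lia.
Qed.

End X0plusArcs.

Section X0plusEps.
Variables (N : nat) (B : {set {set pt N}}).
Hypothesis hB : X0plus B.

Let B_odd := X0plus_odd_arcs hB.
Let B_disj := X0plus_arcs_disjoint hB.

Lemma X0plus_cover_count_end x : (x == 0) || (N <= x) -> cover_count B x = 0.
Proof.
move=> hx; apply/eqP; rewrite cards_eq0; apply/eqP/setP=> -[a b]; rewrite !inE /=.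
case hab: (arc B (a, b)) => //=; have /= := arc_pos B_odd hab.
by have := X0plus_arc_ltN hB hab; move: hx; lia.
Qed.

Lemma X0plus_depth_end x : N.-1 <= x -> depth B x = 0.
Proof.
move=> hx; apply/eqP; rewrite cards_eq0; apply/eqP/setP=> -[a b]; rewrite !inE /=.
by case hab: (arc B (a, b)) => //=; have := X0plus_arc_ltN hB hab; lia.
Qed.

Lemma depth_level_X0plus x : x <= N -> depth B x = level (nat_mem (eps B)) x.
Proof.
exact: depth_level B_odd B_disj (X0plus_arcs_filled hB) x.
Qed.

Lemma X0plus_eps : E0plus (eps B).
Proof.
have eps0 : inS (eps B) by rewrite /inS mem_eps_cover //= X0plus_cover_count_end.
have [gamma0 even] : gamma (eps B) = 0%R /\ ~~ odd #|eps B|.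
  by apply: level_gamma; rewrite // -depth_level_X0plus ?X0plus_depth_end ?leq_pred.
by do 2!split=> //; rewrite mem_eps_cover //= X0plus_cover_count_end ?leqnn ?orbT.
Qed.

Lemma X0plus_supp_predN : 1 < N ->
  (inord N.-1 \in supp B) = (inord N.-1 \in eps B).
Proof.
move=> N1; rewrite (mem_supp B_odd) mem_eps_cover // inordK; last lia.
have nopen : ~~ opens B N.-1.
  apply/existsP=> -[[a b] /andP [hab /eqP /= aN]].
  by have /= := arc_pos B_odd hab; have := X0plus_arc_ltN hB hab; lia.
rewrite (negbTE nopen) /=; case hc: (closes B N.-1).
  by rewrite (cover_count_closes B_odd B_disj hc) (depth_closes B_odd B_disj hc) X0plus_depth_end.
by have [-> _] := cover_count_idle (X0plus_arcs_filled hB) (x := N.-1) ltac:(lia) nopen (negbT hc).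
Qed.

End X0plusEps.

Lemma eps_inj N (B B' : {set {set pt N}}) : X0plus B -> X0plus B' -> eps B = eps B' -> B = B'.
Proof.
move=> hB hB' eB.
have e_depth x : x <= N -> depth B x = depth B' x.
  by move=> xN; rewrite !depth_level_X0plus // eB.
apply: odd_arcs_eq (X0plus_odd_arcs hB) (X0plus_odd_arcs hB') _ => p.
rewrite (arcE (X0plus_odd_arcs hB) (X0plus_arcs_disjoint hB) (X0plus_arcs_nested hB)).
rewrite (arcE (X0plus_odd_arcs hB') (X0plus_arcs_disjoint hB') (X0plus_arcs_nested hB')).
by apply: eq_matched e_depth _; rewrite -ltnS.
Qed.

Section MatchingOfSet.
Variables (N : nat) (X : {set pt N}).
Hypotheses (hX : E0plus X) (N_gt0 : 0 < N).

Local Notation l := (level (nat_mem X)).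

Let l_step := level_dyck_step (nat_mem X).

Lemma level_E0plus_end : l N = 0 /\ l N.-1 = 0.
Proof.
have [[X0 _] [XN gamma0]] := hX.
apply: level_end => //; first exact: nat_mem0.
- by rewrite /count_even /count_odd !sum_nat_mem; move: gamma0; rewrite /gamma; lia.
- by rewrite -[N]/(nat_of_ord (@ord_max N)) nat_mem_ord (negbTE XN).
Qed.

Let lN := proj1 level_E0plus_end.

Definition matching : {set {set pt N}} :=
  [set [set p.1; p.2] | p in [set p : pt N * pt N | matched l p.1 p.2]].

Lemma arc_matching (p : pt N * pt N) : arc matching p = matched l p.1 p.2.
Proof.
apply/andP/idP => [[ab /imsetP [[c d]]]|mp].
- rewrite inE => /= mcd E; have /matchedP [_ cd _ _ _] := mcd.
  by case: (ord_set2_inj ab cd E) => -> ->.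
- by split; [case/matchedP: mp | apply/imsetP; exists p; rewrite ?inE].
Qed.

Lemma matching_odd_arcs : odd_arcs matching.
Proof.
move=> P /imsetP [[a b]]; rewrite inE /= => mab ->; exists (a, b).
by have /matchedP [a0 ab _ _ _] := mab; split => //=; apply: matched_odd mab.
Qed.

Lemma matching_arcs_disjoint : arcs_disjoint matching.
Proof.
move=> [a b] [c d]; rewrite !arc_matching /= => mab mcd.
case/or4P=> /eqP e.
- by rewrite e in mab; have := matched_uniq_r mab mcd => e'; congr pair; apply: val_inj.
- by rewrite e in mab; case: (no_matched_chain mab mcd).
- by rewrite -e in mcd; case: (no_matched_chain mcd mab).
- by rewrite e in mab; have := matched_uniq_l mab mcd => e'; congr pair; apply: val_inj.
Qed.

Lemma matching_max_notin_supp : ord_max \notin supp matching.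
Proof.
rewrite (mem_supp matching_odd_arcs); apply/norP; split; apply/existsP => -[[a b]];
  rewrite arc_matching /= => /andP [/matchedP [a0 ab la lb above] /eqP /= e].
- by have := ltn_ord b; lia.
- by have := above N.-1; have := proj2 level_E0plus_end; lia.
Qed.

Lemma matching_cover (i j : pt N) : matched l i j -> zero_cov matching (iv N i.+1 j.-1).
Proof.
move=> mij; have jN := ltn_ord j.
apply: (zero_cov_of_set (S := [set p : pt N * pt N |
  [&& matched l p.1 p.2, i < p.1 < j & l p.1.-1 == l i]])).
- move=> [a b]; rewrite inE /= => /and3P [mab _ _].
  split; first by case/matchedP: mab.
  by apply: (odd_arcs_B1 matching_odd_arcs); apply/imsetP; exists (a, b); rewrite ?inE.
- move=> [a b] [c d]; rewrite !inE /= => /and3P [mab _ /eqP la] /and3P [mcd _ /eqP lc] ne.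
  rewrite -setI_eq0; apply/eqP/setP=> z; rewrite !inE; apply/negP => /andP [zab zcd].
  case: (ltngtP a c) => ac.
  + by have := matched_siblings mab mcd ltac:(lia) ac; lia.
  + by have := matched_siblings mcd mab ltac:(lia) ac; lia.
  + rewrite ac in mab; have := matched_uniq_r mab mcd => bd.
    by case/eqP: ne; congr pair; apply: val_inj.
- move=> y; rewrite inE; apply: (iffP idP).
  + move=> hy; have iyj : i < y < j by lia.
    have [a [b [mab ia bj ab_y la]]] := matched_cover l_step (erefl 0) lN (jN : j <= N) mij iyj.
    by exists (inord a, inord b); rewrite inE /= !inordK; lia.
  + by case=> -[a b]; rewrite !inE /= => /and3P [mab iaj _] yab; have := matched_nested mij mab iaj; lia.
Qed.

Lemma matching_X0plus : X0plus matching.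
Proof.
have B0_0 := odd_arcs_B0 matching_odd_arcs.
split; last by rewrite B0_0 cards0.
split; last by split; [exact: matching_max_notin_supp | left; rewrite B0_0 cards0].
split; first exact: odd_arcs_PN matching_odd_arcs matching_arcs_disjoint.
split; last by exists [::]; apply: odd_arcs_istar_nil matching_odd_arcs.
move=> P i j /setIdP [/imsetP [[a b]]]; rewrite inE /= => mab -> _ w.
have /matchedP [_ ab _ _ _] := mab.
by have [-> ->] := writing_odd_set2 ab (matched_odd l_step mab) w; apply: matching_cover.
Qed.

Lemma depth_matching x : x <= N -> depth matching x = l x.
Proof.
have B_odd := matching_odd_arcs; have B_disj := matching_arcs_disjoint.
have arc_inord i j : i <= N -> j <= N -> matched l i j -> arc matching (inord i, inord j).
  by move=> iN jN mij; rewrite arc_matching /= !inordK.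
elim: x => [|x IH] xN; first exact: depth0.
have {}IH := IH (ltnW xN).
case/orP: (l_step x) => [/orP [] /eqP up_down|/andP [/eqP l0 /eqP l1]].
- have [j [xj mj]] := matched_of_up l_step (erefl 0) lN (i := x.+1) ltac:(lia) up_down.
  have ox : opens matching x.+1.
    by apply/existsP; exists (inord x.+1, inord j); rewrite arc_inord //= ?inordK //; lia.
  by rewrite depth_opens // IH up_down.
- have [i [ix mi]] := matched_of_down l_step (erefl 0) lN (j := x.+1) ltac:(lia) up_down.
  have cx : closes matching x.+1.
    by apply/existsP; exists (inord i, inord x.+1); rewrite arc_inord //= ?inordK //; lia.
  by have := depth_closes B_odd B_disj cx; rewrite IH up_down; lia.
- have no : ~~ opens matching x.+1.
    apply/existsP => -[[a b] /andP [+ /eqP /= ax]].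
    by rewrite arc_matching /= ax => /matchedP [_ _]; rewrite l1 /= l0.
  have nc : ~~ closes matching x.+1.
    apply/existsP => -[[a b] /andP [+ /eqP /= bx]].
    by rewrite arc_matching /= bx => /matchedP [_ ax _ _ /(_ x)]; rewrite l0; lia.
  by rewrite depth_idle // IH l0 l1.
Qed.

Lemma eps_matching : eps matching = X.
Proof.
have hB := matching_X0plus.
have e_level y : y <= N -> level (nat_mem (eps matching)) y = l y.
  by move=> yN; rewrite -depth_level_X0plus // depth_matching.
apply/setP=> z; case: (posnP z) => [z0|z_gt0].
- have -> : z = ord0 by apply: val_inj.
  have [[eps0 _] _] := X0plus_eps hB; have [[X0 _] _] := hX.
  by rewrite (negbTE eps0) (negbTE X0).
- by rewrite -!nat_mem_ord; apply: level_inj e_level _ _; rewrite z_gt0 -ltnS ltn_ord.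
Qed.

End MatchingOfSet.

Lemma X0plus_E0plus_bij N : 0 < N -> bij_betw (@X0plus N) (@E0plus N) (@eps N).
Proof.
move=> N_gt0; split; [exact: X0plus_eps | split; first exact: eps_inj].
by move=> X hX; exists (matching X); split; [apply: matching_X0plus | apply: eps_matching].
Qed.

Lemma bij_betw_restrict (A C : Type) (P R : A -> Prop) (Q S : C -> Prop) (f : A -> C) :
  bij_betw P Q f -> (forall a, P a -> (R a <-> S (f a))) ->
  bij_betw (fun a => P a /\ R a) (fun c => Q c /\ S c) f.
Proof.
move=> [PQ [inj_f onto_f]] RS; split; [|split].
- by move=> a [Pa Ra]; split; [apply: PQ | apply/RS].
- by move=> a a' [Pa _] [Pa' _]; apply: inj_f.
- move=> c [Qc Sc]; have [a [Pa fa]] := onto_f c Qc.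
  by exists a; split=> //; split=> //; apply/RS => //; rewrite fa.
Qed.

Unset Implicit Arguments.

Theorem mainTheorem7 (N : nat) (hN3 : (3 <= N)%N) (hNodd : odd N) :
  bij_betw (@X0plus' N) (@E0plus' N) (@eps N) /\
  bij_betw (@X0plus'' N) (@E0plus'' N) (@eps N).
Proof.
have N_gt1 : 1 < N by lia.
have bij := X0plus_E0plus_bij (ltnW N_gt1).
by split; apply: (bij_betw_restrict bij) => B hB; rewrite X0plus_supp_predN.
Qed.
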